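(* Let $(T_\infty,P_\infty)$ be the least fixed point of the jump operator $\Gamma_{\mathscr{TP}}$ (the stage at which the transfinite sequence $(T_\alpha,P_\alpha)$ defined in the context stabilizes). Then the partial model $(\mathbb N,T_\infty,P_\infty)$ is a model of the theory $\mathrm{TP}$, i.e. every sequent derivable in $\mathrm{TP}$ holds in $(\mathbb N,T_\infty,P_\infty)$ under Strong Kleene satisfaction. Hence $\mathrm{TP}$ is $\omega$-consistent.
   Context: Language. Let $\mathcal L_{\mathbb N}$ be the language of first-order Peano arithmetic and $\mathcal L=\mathcal L_{\mathbb N}\cup\{\mathrm T,\mathrm P\}$, where $\mathrm T$ (truth) and $\mathrm P$ (paradoxicality) are unary predicates. $\mathcal L$-formulas are in Tait style: literals are $s=t$, $s\neq t$, $\mathrm Tt$, $\neg\mathrm Tt$, $\mathrm Pt$, $\neg\mathrm Pt$, and formulas are built from literals by $\wedge,\vee,\forall,\exists$; negation of an arbitrary formula is defined by De Morgan dualities ($\neg(\varphi\wedge\psi):=\neg\varphi\vee\neg\psi$, $\neg\forall x\varphi:=\exists x\neg\varphi$, etc.) with $\neg\neg\varphi:=\varphi$. A standard Gödel numbering is fixed; $\#e$ is the code of an expression $e$, $\ulcorner e\urcorner$ is the numeral of $\#e$, $\mathrm{val}(t)$ is the value of a closed term $t$, and $\dot\neg$ is the primitive recursive function with $\dot\neg(\#\varphi)=\#\neg\varphi$. We write $\mathrm T\varphi,\mathrm P\varphi$ for $\mathrm T\ulcorner\varphi\urcorner,\mathrm P\ulcorner\varphi\urcorner$ and identify sentences with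 their codes when speaking of sets of sentences. Semantics. A partial model is $(\mathbb N,T,P)$ with $\mathbb N$ the standard model of arithmetic and $T=(T^+,T^-)$, $P=(P^+,P^-)$ pairs of subsets of $\omega$. Strong Kleene satisfaction $\models_{SK}$ for $\mathcal L$-sentences: arithmetic literals are evaluated in $\mathbb N$; $\mathrm Tt$ is satisfied iff $\mathrm{val}(t)\in T^+$, $\neg\mathrm Tt$ iff $\mathrm{val}(t)\in T^-$, and likewise for $\mathrm Pt,\neg\mathrm Pt$ with $P^+,P^-$; a conjunction is satisfied iff both conjuncts are, a disjunction iff at least one disjunct is, $\forall x\varphi(x)$ iff $\varphi(\bar n)$ is satisfied for all $n\in\omega$, $\exists x\varphi(x)$ iff for some $n$. A sequent $\Gamma\Rightarrow\Delta$ of sentences holds in $(\mathbb N,T,P)$ iff, whenever all members of $\Gamma$ are satisfied, some member of $\Delta$ is; a sequent with free variables holds iff all its numeral instances hold. $\Gamma\Leftrightarrow\Delta$ abbreviates the two sequents $\Gamma\Rightarrow\Delta$ and $\Delta\Rightarrow\Gamma$. Base system. $\mathrm{PA}[\mathrm{SK}]$ is the two-sided sequent calculus for Strong Kleene logic with identity in $\mathcal L$ (initial sequents $\varphi\Rightarrow\varphi$; cut; weakening on both sides; the rule: from $\Gamma\Rightarrow\Delta,\varphi$ infer $\neg\varphi,\Gamma\Rightarrow\Delta$; the usual left and right rules for $\wedge,\vee,\forall,\exists$; reflexivity $\Gamma\Rightarrow\Delta,t=t$; replacement: from $\Gamma\Rightarrow\Delta,\varphi(t)$ infer $\Gamma\Rightarrow\Delta,s\neq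 t,\varphi(s)$), expanded by the initial sequents of Peano arithmetic and the induction rule: from $\varphi(u),\Gamma\Rightarrow\Delta,\varphi(Su)$ infer $\varphi(0),\Gamma\Rightarrow\Delta,\varphi(t)$, for every $\mathcal L$-formula $\varphi$ and eigenvariable $u$. Sentences $\varphi,\psi$ are $\mathrm{PA}[\mathrm{SK}]$-equivalent iff $\mathrm{PA}[\mathrm{SK}]$ derives $\varphi\Leftrightarrow\psi$ and $\neg\varphi\Leftrightarrow\neg\psi$. A sentence $\varphi$ is base paradoxical iff it is $\mathrm{PA}[\mathrm{SK}]$-equivalent to $\neg\mathrm T\varphi$. $B(x)$ is an $\mathcal L_{\mathbb N}$-formula defining in $\mathbb N$ the set of codes of base paradoxical sentences, and $\Pi(x):=B(x)\vee B(\dot\neg x)$. The theory TP. $\mathrm{TP}$ expands $\mathrm{PA}[\mathrm{SK}]$ by the following initial sequents. In them $\varphi,\psi$ are variables ranging over codes of $\mathcal L$-sentences (in the quantifier principles, $\varphi(x)$ denotes the code of the instance, with the numeral of $x$, of a formula code with one free variable), $s,t$ range over codes of closed terms, each principle is read as the corresponding sequents with these free variables and the syntactic side conditions (being a sentence code, closed term code, etc.) as antecedent hypotheses; expressions inside $\mathrm T(\cdot)$, $\mathrm P(\cdot)$ denote codes built by the corresponding primitive recursive syntactic operations (e.g. $\mathrm T\mathrm P\varphi$ is $\mathrm T$ applied to the code of the sentence $\mathrm P\bar n$ with $n$ the value of $\varphi$; $\neg\varphi$ inside a code is $\dot\neg\varphi$), and $A$ ranges over $\{\mathrm T,\mathrm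 P\}$. Truth principles: (T1) $\mathrm{val}(s)=\mathrm{val}(t)\Leftrightarrow\mathrm T(s\dot=t)$ and $\mathrm{val}(s)\neq\mathrm{val}(t)\Leftrightarrow\mathrm T(s\dot\neq t)$; (T2) $\mathrm P\varphi\Leftrightarrow\mathrm T\mathrm P\varphi$ and $\neg\mathrm P\varphi\Leftrightarrow\mathrm T\neg\mathrm P\varphi$; (T3) $\mathrm T\varphi\Leftrightarrow\mathrm T\mathrm T\varphi$ and $\mathrm T\neg\varphi\Leftrightarrow\neg\mathrm T\varphi$; (T4) $\mathrm T\varphi\wedge\mathrm T\psi\Leftrightarrow\mathrm T(\varphi\wedge\psi)$ and $\mathrm T\varphi\vee\mathrm T\psi\Leftrightarrow\mathrm T(\varphi\vee\psi)$; (T5) $\forall x\mathrm T\varphi(x)\Leftrightarrow\mathrm T\forall x\varphi(x)$ and $\exists x\mathrm T\varphi(x)\Leftrightarrow\mathrm T\exists x\varphi(x)$. Paradoxicality principles: (P1) $\Pi(\varphi)\Rightarrow\mathrm P\varphi$; (P2) $\mathrm P\neg A\varphi\Leftrightarrow\mathrm PA\varphi$; (P3) $\mathrm P\mathrm T\varphi\Leftrightarrow\mathrm P\varphi\vee\Pi(\mathrm T\varphi)$; (P4) $\mathrm P(\varphi\wedge\psi)\Leftrightarrow(\mathrm P\varphi\wedge\mathrm P\psi)\vee(\mathrm T\varphi\wedge\mathrm P\psi)\vee(\mathrm T\psi\wedge\mathrm P\varphi)\vee\Pi(\varphi\wedge\psi)$; (P5) $\mathrm P(\varphi\vee\psi)\Leftrightarrow(\mathrm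 P\varphi\wedge\mathrm P\psi)\vee(\neg\mathrm T\varphi\wedge\mathrm P\psi)\vee(\neg\mathrm T\psi\wedge\mathrm P\varphi)\vee\Pi(\varphi\vee\psi)$; (P6) $\mathrm P\forall x\varphi(x)\Leftrightarrow(\exists x\mathrm P\varphi(x)\wedge\forall y(\mathrm P\varphi(y)\vee\mathrm T\varphi(y)))\vee\Pi(\forall x\varphi(x))$; (P7) $\mathrm P\exists x\varphi(x)\Leftrightarrow(\exists x\mathrm P\varphi(x)\wedge\forall y(\mathrm P\varphi(y)\vee\neg\mathrm T\varphi(y)))\vee\Pi(\exists x\varphi(x))$. Interaction principle: (I1) $\mathrm T(\varphi\vee\neg\varphi)\Rightarrow\neg\mathrm P\varphi$. Jump. Let $\mathscr P(x)$ be the $\mathcal L$-formula which is the disjunction of: (1) $x$ codes a sentence and $\Pi(x)$; (2) $x$ codes a sentence $\mathrm Tt$ ($t$ a closed term) and $\mathrm P(\mathrm{val}(t))$; (3) $x$ codes a sentence $\neg\mathrm Tt$ and $\mathrm P(\mathrm{val}(t))$; (4) $x$ codes a sentence $\psi\wedge\theta$ and $(\mathrm P\psi\wedge\mathrm P\theta)\vee(\mathrm T\psi\wedge\mathrm P\theta)\vee(\mathrm T\theta\wedge\mathrm P\psi)$; (5) $x$ codes a sentence $\psi\vee\theta$ and $(\mathrm P\psi\wedge\mathrm P\theta)\vee(\neg\mathrm T\psi\wedge\mathrm P\theta)\vee(\neg\mathrm T\theta\wedge\mathrm P\psi)$; (6) $x$ codes a sentence $\forall v\psi$ and $\exists y\,\mathrm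 P\psi(\dot y)\wedge\forall y(\mathrm P\psi(\dot y)\vee\mathrm T\psi(\dot y))$; (7) $x$ codes a sentence $\exists v\psi$ and $\exists y\,\mathrm P\psi(\dot y)\wedge\forall y(\mathrm P\psi(\dot y)\vee\neg\mathrm T\psi(\dot y))$; here $\psi(\dot y)$ is the code of the result of substituting the numeral of $y$ for $v$. Write $\mathscr P(\varphi)$ for $\mathscr P(\ulcorner\varphi\urcorner)$. Define $\Gamma_{\mathscr{TP}}(T,P)=\big((\{\#\varphi:(\mathbb N,T,P)\models_{SK}\varphi\},\{\#\varphi:(\mathbb N,T,P)\models_{SK}\neg\varphi\}),(\{\#\varphi:(\mathbb N,T,P)\models_{SK}\mathscr P(\varphi)\},\{\#\varphi:(\mathbb N,T,P)\models_{SK}\varphi\vee\neg\varphi\})\big)$, $\varphi$ ranging over $\mathcal L$-sentences. Pairs are ordered componentwise by inclusion. Define $(T_0,P_0)=((\emptyset,\emptyset),(\emptyset,\emptyset))$, $(T_{\beta+1},P_{\beta+1})=\Gamma_{\mathscr{TP}}(T_\beta,P_\beta)$, and $(T_\lambda,P_\lambda)=\bigcup_{\beta<\lambda}(T_\beta,P_\beta)$ (componentwise union) for limit $\lambda$. $\omega$-consistency is meant in the standard sense: there is no formula $\varphi(x)$ such that the theory derives $\Rightarrow\varphi(\bar n)$ for every $n$ and also $\Rightarrow\exists x\neg\varphi(x)$. *)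

From Stdlib Require Import List Arith.
Import ListNotations.

Inductive term : Type :=
| tvar (n : nat)
| tzero
| tsucc (t : term)
| tplus (s t : term)
| ttimes (s t : term).

(* Tait-style L-formulas (L = L_N + T + P) *)
Inductive form : Type :=
| fEq (s t : term) | fNeq (s t : term)
| fT (t : term)    | fNT (t : term)
| fP (t : term)    | fNP (t : term)
| fAnd (A B : form) | fOr (A B : form)
| fAll (A : form)   | fEx (A : form).   (* binders: variable 0 of the body *)

Fixpoint neg (A : form) : form :=
  match A with
  | fEq s t => fNeq s t | fNeq s t => fEq s t
  | fT t => fNT t | fNT t => fT t
  | fP t => fNP t | fNP t => fP t
  | fAnd A B => fOr (neg A) (neg B)
  | fOr A B => fAnd (neg A) (neg B)
  | fAll A => fEx (neg A)
  | fEx A => fAll (neg A)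
  end.

Fixpoint tsubst (s : nat -> term) (t : term) : term :=
  match t with
  | tvar n => s n
  | tzero => tzero
  | tsucc t => tsucc (tsubst s t)
  | tplus a b => tplus (tsubst s a) (tsubst s b)
  | ttimes a b => ttimes (tsubst s a) (tsubst s b)
  end.

Definition tshift (t : term) : term := tsubst (fun i => tvar (S i)) t.

Definition up (s : nat -> term) : nat -> term :=
  fun n => match n with 0 => tvar 0 | S k => tshift (s k) end.

Fixpoint fsubst (s : nat -> term) (A : form) : form :=
  match A with
  | fEq a b => fEq (tsubst s a) (tsubst s b)
  | fNeq a b => fNeq (tsubst s a) (tsubst s b)
  | fT t => fT (tsubst s t) | fNT t => fNT (tsubst s t)
  | fP t => fP (tsubst s t) | fNP t => fNP (tsubst s t)
  | fAnd A B => fAnd (fsubst s A) (fsubst s B)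
  | fOr A B => fOr (fsubst s A) (fsubst s B)
  | fAll A => fAll (fsubst (up s) A)
  | fEx A => fEx (fsubst (up s) A)
  end.

Definition fshift (A : form) : form := fsubst (fun i => tvar (S i)) A.

(* A(t): instantiate the bound variable (variable 0) of a body by t *)
Definition inst (A : form) (t : term) : form :=
  fsubst (fun n => match n with 0 => t | S k => tvar k end) A.

(* A(Su) from A(u), u = variable 0 *)
Definition succ0 : nat -> term :=
  fun n => match n with 0 => tsucc (tvar 0) | S k => tvar (S k) end.

Definition num (n : nat) : term := Nat.iter n tsucc tzero.

Fixpoint tfree_lt (k : nat) (t : term) : Prop :=
  match t with
  | tvar n => n < k
  | tzero => True
  | tsucc t => tfree_lt k t
  | tplus a b | ttimes a b => tfree_lt k a /\ tfree_lt k b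
  end.

Fixpoint ffree_lt (k : nat) (A : form) : Prop :=
  match A with
  | fEq a b | fNeq a b => tfree_lt k a /\ tfree_lt k b
  | fT t | fNT t | fP t | fNP t => tfree_lt k t
  | fAnd A B | fOr A B => ffree_lt k A /\ ffree_lt k B
  | fAll A | fEx A => ffree_lt (S k) A
  end.

Definition sentence (A : form) : Prop := ffree_lt 0 A.
Definition closed_term (t : term) : Prop := tfree_lt 0 t.

Fixpoint arith (A : form) : Prop :=
  match A with
  | fEq _ _ | fNeq _ _ => True
  | fT _ | fNT _ | fP _ | fNP _ => False
  | fAnd A B | fOr A B => arith A /\ arith B
  | fAll A | fEx A => arith A
  end.

Definition cpair (a b : nat) : nat := (a + b) * (a + b + 1) / 2 + b.

Fixpoint tcode (t : term) : nat :=
  match t with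
  | tvar n => cpair 0 n
  | tzero => cpair 1 0
  | tsucc t => cpair 2 (tcode t)
  | tplus a b => cpair 3 (cpair (tcode a) (tcode b))
  | ttimes a b => cpair 4 (cpair (tcode a) (tcode b))
  end.

Fixpoint code (A : form) : nat :=
  match A with
  | fEq a b => cpair 0 (cpair (tcode a) (tcode b))
  | fNeq a b => cpair 1 (cpair (tcode a) (tcode b))
  | fT t => cpair 2 (tcode t)
  | fNT t => cpair 3 (tcode t)
  | fP t => cpair 4 (tcode t)
  | fNP t => cpair 5 (tcode t)
  | fAnd A B => cpair 6 (cpair (code A) (code B))
  | fOr A B => cpair 7 (cpair (code A) (code B))
  | fAll A => cpair 8 (code A)
  | fEx A => cpair 9 (code A)
  end.

Definition quote (A : form) : term := num (code A).

Record model : Type := Model {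
  Tpos : nat -> Prop; Tneg : nat -> Prop;
  Ppos : nat -> Prop; Pneg : nat -> Prop }.

Fixpoint teval (r : nat -> nat) (t : term) : nat :=
  match t with
  | tvar n => r n
  | tzero => 0
  | tsucc t => S (teval r t)
  | tplus a b => teval r a + teval r b
  | ttimes a b => teval r a * teval r b
  end.

Definition val (t : term) : nat := teval (fun _ => 0) t.

Definition scons (n : nat) (r : nat -> nat) : nat -> nat :=
  fun i => match i with 0 => n | S k => r k end.

Fixpoint sat (M : model) (r : nat -> nat) (A : form) : Prop :=
  match A with
  | fEq a b => teval r a = teval r b
  | fNeq a b => teval r a <> teval r b
  | fT t => Tpos M (teval r t)
  | fNT t => Tneg M (teval r t)
  | fP t => Ppos M (teval r t)
  | fNP t => Pneg M (teval r t)
  | fAnd A B => sat M r A /\ sat M r B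
  | fOr A B => sat M r A \/ sat M r B
  | fAll A => forall n, sat M (scons n r) A
  | fEx A => exists n, sat M (scons n r) A
  end.

Definition ssat (M : model) (A : form) : Prop := sat M (fun _ => 0) A.

Definition holds (M : model) (G D : list form) : Prop :=
  forall r, (forall A, In A G -> sat M r A) -> exists B, In B D /\ sat M r B.

Definition emptyM : model := Model (fun _ => False) (fun _ => False)
                                   (fun _ => False) (fun _ => False).
Definition asat (r : nat -> nat) (A : form) : Prop := sat emptyM r A.

Inductive deriv (Ax : list form -> list form -> Prop) :
  list form -> list form -> Prop :=
| d_ax G D s : Ax G D -> deriv Ax (map (fsubst s) G) (map (fsubst s) D)
| d_id A : deriv Ax [A] [A]
| d_cut G D A : deriv Ax G (A :: D) -> deriv Ax (A :: G) D -> deriv Ax G D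
| d_weak G D G' D' : deriv Ax G D -> incl G G' -> incl D D' -> deriv Ax G' D'
| d_negL G D A : deriv Ax G (A :: D) -> deriv Ax (neg A :: G) D
| d_andL G D A B : deriv Ax (A :: B :: G) D -> deriv Ax (fAnd A B :: G) D
| d_andR G D A B : deriv Ax G (A :: D) -> deriv Ax G (B :: D) ->
    deriv Ax G (fAnd A B :: D)
| d_orL G D A B : deriv Ax (A :: G) D -> deriv Ax (B :: G) D ->
    deriv Ax (fOr A B :: G) D
| d_orR G D A B : deriv Ax G (A :: B :: D) -> deriv Ax G (fOr A B :: D)
| d_allL G D A t : deriv Ax (inst A t :: G) D -> deriv Ax (fAll A :: G) D
| d_allR G D A : deriv Ax (map fshift G) (A :: map fshift D) ->
    deriv Ax G (fAll A :: D)
| d_exL G D A : deriv Ax (A :: map fshift G) (map fshift D) ->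
    deriv Ax (fEx A :: G) D
| d_exR G D A t : deriv Ax G (inst A t :: D) -> deriv Ax G (fEx A :: D)
| d_refl G D t : deriv Ax G (fEq t t :: D)
| d_repl G D A s t : deriv Ax G (inst A t :: D) ->
    deriv Ax G (fNeq s t :: inst A s :: D)
| d_ind G D A t :
    deriv Ax (A :: map fshift G) (fsubst succ0 A :: map fshift D) ->
    deriv Ax (inst A tzero :: G) (inst A t :: D).

(* initial sequents of Peano arithmetic (schematic via d_ax) *)
Inductive PAax : list form -> list form -> Prop :=
| pa_lem : PAax [] [fEq (tvar 0) (tvar 1); fNeq (tvar 0) (tvar 1)]
| pa_s0 : PAax [] [fNeq (tsucc (tvar 0)) tzero]
| pa_sinj : PAax [fEq (tsucc (tvar 0)) (tsucc (tvar 1))] [fEq (tvar 0) (tvar 1)]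
| pa_plus0 : PAax [] [fEq (tplus (tvar 0) tzero) (tvar 0)]
| pa_plusS : PAax [] [fEq (tplus (tvar 0) (tsucc (tvar 1)))
                          (tsucc (tplus (tvar 0) (tvar 1)))]
| pa_times0 : PAax [] [fEq (ttimes (tvar 0) tzero) tzero]
| pa_timesS : PAax [] [fEq (ttimes (tvar 0) (tsucc (tvar 1)))
                           (tplus (ttimes (tvar 0) (tvar 1)) (tvar 0))].

Definition PAderiv : list form -> list form -> Prop := deriv PAax.

Definition PA_equiv (A B : form) : Prop :=
  PAderiv [A] [B] /\ PAderiv [B] [A] /\
  PAderiv [neg A] [neg B] /\ PAderiv [neg B] [neg A].

Definition base_paradoxical (A : form) : Prop :=
  sentence A /\ PA_equiv A (fNT (quote A)).

Definition BPcodes (n : nat) : Prop :=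
  exists A, base_paradoxical A /\ code A = n.

Definition defines1 (F : form) (Rl : nat -> Prop) : Prop :=
  arith F /\ forall r, asat r F <-> Rl (r 0).
Definition defines2 (F : form) (Rl : nat -> nat -> Prop) : Prop :=
  arith F /\ forall r, asat r F <-> Rl (r 0) (r 1).
Definition defines3 (F : form) (Rl : nat -> nat -> nat -> Prop) : Prop :=
  arith F /\ forall r, asat r F <-> Rl (r 0) (r 1) (r 2).

Definition SentR (x : nat) : Prop := exists A, sentence A /\ code A = x.
Definition ClTR (x : nat) : Prop := exists t, closed_term t /\ tcode t = x.
Definition ValR (x y : nat) : Prop :=
  exists t, closed_term t /\ tcode t = x /\ val t = y.
Definition EqcR (x y z : nat) : Prop :=
  exists s t, closed_term s /\ closed_term t /\ tcode s = x /\ tcode t = y /\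
              code (fEq s t) = z.
Definition NeqcR (x y z : nat) : Prop :=
  exists s t, closed_term s /\ closed_term t /\ tcode s = x /\ tcode t = y /\
              code (fNeq s t) = z.
Definition NegR (x y : nat) : Prop := exists A, code A = x /\ code (neg A) = y.
Definition TcR (x y : nat) : Prop := y = code (fT (num x)).
Definition PcR (x y : nat) : Prop := y = code (fP (num x)).
Definition AndcR (x y z : nat) : Prop :=
  exists A B, code A = x /\ code B = y /\ code (fAnd A B) = z.
Definition OrcR (x y z : nat) : Prop :=
  exists A B, code A = x /\ code B = y /\ code (fOr A B) = z.
Definition Fml1R (x : nat) : Prop := exists A, ffree_lt 1 A /\ code A = x.
Definition AllcR (x y : nat) : Prop := exists A, code A = x /\ code (fAll A) = y.
Definition ExcR (x y : nat) : Prop := exists A, code A = x /\ code (fEx A) = y.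
Definition SubR (x n y : nat) : Prop :=
  exists A, code A = x /\ code (inst A (num n)) = y.

Record SynRep : Type := {
  rSent : form; rClT : form; rVal : form; rEqc : form; rNeqc : form;
  rNeg : form; rTc : form; rPc : form; rAndc : form; rOrc : form;
  rFml1 : form; rAllc : form; rExc : form; rSub : form }.

Definition rep_correct (R : SynRep) : Prop :=
  defines1 (rSent R) SentR /\ defines1 (rClT R) ClTR /\
  defines2 (rVal R) ValR /\ defines3 (rEqc R) EqcR /\
  defines3 (rNeqc R) NeqcR /\ defines2 (rNeg R) NegR /\
  defines2 (rTc R) TcR /\ defines2 (rPc R) PcR /\
  defines3 (rAndc R) AndcR /\ defines3 (rOrc R) OrcR /\
  defines1 (rFml1 R) Fml1R /\ defines2 (rAllc R) AllcR /\
  defines2 (rExc R) ExcR /\ defines3 (rSub R) SubR.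

Definition fapp (F : form) (ts : list term) : form :=
  fsubst (fun i => nth i ts tzero) F.

(* lit(f(args)) := exists z (G(args,z) /\ lit(z)) *)
Definition via (G : form) (args : list term) (lit : term -> form) : form :=
  fEx (fAnd (fapp G (map tshift args ++ [tvar 0])) (lit (tvar 0))).

Definition Pi (R : SynRep) (B : form) : form :=
  fOr (fapp B [tvar 0])
      (fEx (fAnd (fapp (rNeg R) [tvar 1; tvar 0]) (fapp B [tvar 0]))).
Definition PiAt (R : SynRep) (B : form) (t : term) : form := fapp (Pi R B) [t].

Section TPaxioms.
Variable R : SynRep.
Variable B : form.
Let v (i : nat) : term := tvar i.
Let Sent t := fapp (rSent R) [t].
Let ClT t := fapp (rClT R) [t].
Let Val a b := fapp (rVal R) [a; b].
Let Eqc a b c := fapp (rEqc R) [a; b; c].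
Let Neqc a b c := fapp (rNeqc R) [a; b; c].
Let Neg a b := fapp (rNeg R) [a; b].
Let Tc a b := fapp (rTc R) [a; b].
Let Pc a b := fapp (rPc R) [a; b].
Let Andc a b c := fapp (rAndc R) [a; b; c].
Let Orc a b c := fapp (rOrc R) [a; b; c].
Let Fml1 a := fapp (rFml1 R) [a].
Let Allc a b := fapp (rAllc R) [a; b].
Let Exc a b := fapp (rExc R) [a; b].
Let PiF t := PiAt R B t.
(* inside one binder (v0 = bound y, v1 = formula code f):  Lit(f(y)) *)
Let SubLit (lit : term -> form) := via (rSub R) [v 1; v 0] lit.

Inductive TPax : list form -> list form -> Prop :=
| T1a : TPax [ClT (v 0); ClT (v 1); Val (v 0) (v 2); Val (v 1) (v 3);
              Eqc (v 0) (v 1) (v 4); fEq (v 2) (v 3)] [fT (v 4)]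
| T1a' : TPax [ClT (v 0); ClT (v 1); Val (v 0) (v 2); Val (v 1) (v 3);
               Eqc (v 0) (v 1) (v 4); fT (v 4)] [fEq (v 2) (v 3)]
| T1b : TPax [ClT (v 0); ClT (v 1); Val (v 0) (v 2); Val (v 1) (v 3);
              Neqc (v 0) (v 1) (v 4); fNeq (v 2) (v 3)] [fT (v 4)]
| T1b' : TPax [ClT (v 0); ClT (v 1); Val (v 0) (v 2); Val (v 1) (v 3);
               Neqc (v 0) (v 1) (v 4); fT (v 4)] [fNeq (v 2) (v 3)]
| T2a : TPax [Sent (v 0); Pc (v 0) (v 1); fP (v 0)] [fT (v 1)]
| T2a' : TPax [Sent (v 0); Pc (v 0) (v 1); fT (v 1)] [fP (v 0)]
| T2b : TPax [Sent (v 0); Pc (v 0) (v 1); Neg (v 1) (v 2); fNP (v 0)] [fT (v 2)]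
| T2b' : TPax [Sent (v 0); Pc (v 0) (v 1); Neg (v 1) (v 2); fT (v 2)] [fNP (v 0)]
| T3a : TPax [Sent (v 0); Tc (v 0) (v 1); fT (v 0)] [fT (v 1)]
| T3a' : TPax [Sent (v 0); Tc (v 0) (v 1); fT (v 1)] [fT (v 0)]
| T3b : TPax [Sent (v 0); Neg (v 0) (v 1); fT (v 1)] [fNT (v 0)]
| T3b' : TPax [Sent (v 0); Neg (v 0) (v 1); fNT (v 0)] [fT (v 1)]
| T4a : TPax [Sent (v 0); Sent (v 1); Andc (v 0) (v 1) (v 2);
              fAnd (fT (v 0)) (fT (v 1))] [fT (v 2)]
| T4a' : TPax [Sent (v 0); Sent (v 1); Andc (v 0) (v 1) (v 2); fT (v 2)]
              [fAnd (fT (v 0)) (fT (v 1))]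
| T4b : TPax [Sent (v 0); Sent (v 1); Orc (v 0) (v 1) (v 2);
              fOr (fT (v 0)) (fT (v 1))] [fT (v 2)]
| T4b' : TPax [Sent (v 0); Sent (v 1); Orc (v 0) (v 1) (v 2); fT (v 2)]
              [fOr (fT (v 0)) (fT (v 1))]
| T5a : TPax [Fml1 (v 0); Allc (v 0) (v 1); fAll (SubLit fT)] [fT (v 1)]
| T5a' : TPax [Fml1 (v 0); Allc (v 0) (v 1); fT (v 1)] [fAll (SubLit fT)]
| T5b : TPax [Fml1 (v 0); Exc (v 0) (v 1); fEx (SubLit fT)] [fT (v 1)]
| T5b' : TPax [Fml1 (v 0); Exc (v 0) (v 1); fT (v 1)] [fEx (SubLit fT)]
| P1 : TPax [Sent (v 0); PiF (v 0)] [fP (v 0)]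
| P2T : TPax [Sent (v 0); Tc (v 0) (v 1); Neg (v 1) (v 2); fP (v 2)] [fP (v 1)]
| P2T' : TPax [Sent (v 0); Tc (v 0) (v 1); Neg (v 1) (v 2); fP (v 1)] [fP (v 2)]
| P2P : TPax [Sent (v 0); Pc (v 0) (v 1); Neg (v 1) (v 2); fP (v 2)] [fP (v 1)]
| P2P' : TPax [Sent (v 0); Pc (v 0) (v 1); Neg (v 1) (v 2); fP (v 1)] [fP (v 2)]
| P3 : TPax [Sent (v 0); Tc (v 0) (v 1); fP (v 1)] [fOr (fP (v 0)) (PiF (v 1))]
| P3' : TPax [Sent (v 0); Tc (v 0) (v 1); fOr (fP (v 0)) (PiF (v 1))] [fP (v 1)]
| P4 : TPax [Sent (v 0); Sent (v 1); Andc (v 0) (v 1) (v 2); fP (v 2)]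
    [fOr (fOr (fOr (fAnd (fP (v 0)) (fP (v 1))) (fAnd (fT (v 0)) (fP (v 1))))
              (fAnd (fT (v 1)) (fP (v 0)))) (PiF (v 2))]
| P4' : TPax [Sent (v 0); Sent (v 1); Andc (v 0) (v 1) (v 2);
    fOr (fOr (fOr (fAnd (fP (v 0)) (fP (v 1))) (fAnd (fT (v 0)) (fP (v 1))))
              (fAnd (fT (v 1)) (fP (v 0)))) (PiF (v 2))] [fP (v 2)]
| P5 : TPax [Sent (v 0); Sent (v 1); Orc (v 0) (v 1) (v 2); fP (v 2)]
    [fOr (fOr (fOr (fAnd (fP (v 0)) (fP (v 1))) (fAnd (fNT (v 0)) (fP (v 1))))
              (fAnd (fNT (v 1)) (fP (v 0)))) (PiF (v 2))]
| P5' : TPax [Sent (v 0); Sent (v 1); Orc (v 0) (v 1) (v 2);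
    fOr (fOr (fOr (fAnd (fP (v 0)) (fP (v 1))) (fAnd (fNT (v 0)) (fP (v 1))))
              (fAnd (fNT (v 1)) (fP (v 0)))) (PiF (v 2))] [fP (v 2)]
| P6 : TPax [Fml1 (v 0); Allc (v 0) (v 1); fP (v 1)]
    [fOr (fAnd (fEx (SubLit fP)) (fAll (fOr (SubLit fP) (SubLit fT))))
         (PiF (v 1))]
| P6' : TPax [Fml1 (v 0); Allc (v 0) (v 1);
    fOr (fAnd (fEx (SubLit fP)) (fAll (fOr (SubLit fP) (SubLit fT))))
        (PiF (v 1))] [fP (v 1)]
| P7 : TPax [Fml1 (v 0); Exc (v 0) (v 1); fP (v 1)]
    [fOr (fAnd (fEx (SubLit fP)) (fAll (fOr (SubLit fP) (SubLit fNT))))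
         (PiF (v 1))]
| P7' : TPax [Fml1 (v 0); Exc (v 0) (v 1);
    fOr (fAnd (fEx (SubLit fP)) (fAll (fOr (SubLit fP) (SubLit fNT))))
        (PiF (v 1))] [fP (v 1)]
| I1 : TPax [Sent (v 0); Neg (v 0) (v 1); Orc (v 0) (v 1) (v 2); fT (v 2)]
            [fNP (v 0)].
End TPaxioms.

Definition TPderiv (R : SynRep) (B : form) : list form -> list form -> Prop :=
  deriv (fun G D => PAax G D \/ TPax R B G D).

(* The jump Gamma_TP (SK-satisfaction of the formula scriptP written out) *)
Definition sent_codes (P : form -> Prop) (n : nat) : Prop :=
  exists A, sentence A /\ code A = n /\ P A.

Definition Pcond (R : SynRep) (B : form) (M : model) (A : form) : Prop :=
  let Pp X := Ppos M (code X) in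
  let Tp X := Tpos M (code X) in
  let Tn X := Tneg M (code X) in
  asat (fun _ => 0) (PiAt R B (quote A))
  \/ (exists t, closed_term t /\ A = fT t /\ Ppos M (val t))
  \/ (exists t, closed_term t /\ A = fNT t /\ Ppos M (val t))
  \/ (exists C D, A = fAnd C D /\
                 ((Pp C /\ Pp D) \/ (Tp C /\ Pp D) \/ (Tp D /\ Pp C)))
  \/ (exists C D, A = fOr C D /\
                 ((Pp C /\ Pp D) \/ (Tn C /\ Pp D) \/ (Tn D /\ Pp C)))
  \/ (exists C, A = fAll C /\
                 (exists y, Pp (inst C (num y))) /\
                 (forall y, Pp (inst C (num y)) \/ Tp (inst C (num y))))
  \/ (exists C, A = fEx C /\
                 (exists y, Pp (inst C (num y))) /\
                 (forall y, Pp (inst C (num y)) \/ Tn (inst C (num y)))).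

Definition jump (R : SynRep) (B : form) (M : model) : model :=
  Model (sent_codes (fun A => ssat M A))
        (sent_codes (fun A => ssat M (neg A)))
        (sent_codes (Pcond R B M))
        (sent_codes (fun A => ssat M (fOr A (neg A)))).

Definition mle (M N : model) : Prop :=
  (forall n, Tpos M n -> Tpos N n) /\ (forall n, Tneg M n -> Tneg N n) /\
  (forall n, Ppos M n -> Ppos N n) /\ (forall n, Pneg M n -> Pneg N n).
Definition meq (M N : model) : Prop := mle M N /\ mle N M.

Definition least_fixed_point (R : SynRep) (B : form) (M : model) : Prop :=
  meq (jump R B M) M /\ (forall N, meq (jump R B N) N -> mle M N).

Definition omega_consistent (D : list form -> list form -> Prop) : Prop :=
  ~ exists A, ffree_lt 1 A /\ (forall n, D [] [inst A (num n)]) /\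
              D [] [fEx (neg A)].

From Stdlib Require Import List Arith Lia Classical Setoid.
Import ListNotations.

(* Every rule of the Strong Kleene sequent calculus, induction included, is sound in a
   partial model over the standard naturals, provided the model is consistent (needed only
   for the rule introducing a negation on the left). So it suffices that the least fixed
   point M of the jump satisfies the initial sequents of TP and is consistent.

   At any fixed point, each truth and paradoxicality principle is one direction of the
   clause of the jump for the corresponding syntactic form, once the arithmetical formulas
   representing syntax are decoded.

   For consistency, M lies below the supremum of the transfinite tower of iterates of the
   monotone jump, which is itself a fixed point. Along the tower we propagate the invariant
   "T and P are consistent and no member of P is true or false". Its key step: in a model
   X below its own jump, a sentence meeting the jump's paradoxicality condition is neither
   true nor false in X, by induction on the sentence. In the base case of a base paradoxical
   sentence, a truth value would, through its PA-equivalence with the claim of its own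
   untruth and X <= jump X, produce the opposite value.

   Finally, derivations of every instance phi(n) and of exists x, ~ phi(x) would make some
   phi(n) both true and false in the consistent model M, so TP is omega-consistent. *)

(** * Goedel codes and substitution *)

Definition triangle (n : nat) : nat := n * (n + 1) / 2.

Lemma triangle_S n : triangle (S n) = triangle n + S n.
Proof.
  unfold triangle.
  replace (S n * (S n + 1)) with (n * (n + 1) + S n * 2) by lia.
  now rewrite Nat.div_add by lia.
Qed.

Lemma triangle_le_mono n m : n <= m -> triangle n <= triangle m.
Proof. induction 1; [lia|]. rewrite triangle_S. lia. Qed.

Lemma cpair_inj a b c d : cpair a b = cpair c d -> a = c /\ b = d.
Proof.
  change (triangle (a + b) + b = triangle (c + d) + d -> a = c /\ b = d).
  intros H.
  destruct (lt_eq_lt_dec (a + b) (c + d)) as [[Hlt|Heq]|Hlt].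
  - pose proof (triangle_le_mono _ _ Hlt). rewrite triangle_S in *. lia.
  - rewrite Heq in H. lia.
  - pose proof (triangle_le_mono _ _ Hlt). rewrite triangle_S in *. lia.
Qed.

Ltac cpair_inv H :=
  let Htag := fresh "Htag" in
  apply cpair_inj in H; destruct H as [Htag H]; try discriminate Htag.

Lemma tcode_inj s t : tcode s = tcode t -> s = t.
Proof.
  revert t; induction s; intros []; simpl; intros H; cpair_inv H;
    repeat match goal with H : cpair _ _ = cpair _ _ |- _ => cpair_inv H end;
    f_equal; auto.
Qed.

Lemma code_inj A B : code A = code B -> A = B.
Proof.
  revert B; induction A; intros []; simpl; intros H; cpair_inv H;
    repeat match goal with H : cpair _ _ = cpair _ _ |- _ => cpair_inv H end;
    f_equal; auto using tcode_inj.
Qed.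

Lemma neg_involutive A : neg (neg A) = A.
Proof. induction A; simpl; congruence. Qed.

Lemma neg_fsubst s A : neg (fsubst s A) = fsubst s (neg A).
Proof. revert s; induction A; intros; simpl; f_equal; auto. Qed.

Lemma fOr_neg_fAnd C D : fOr C D = neg (fAnd (neg C) (neg D)).
Proof. simpl. now rewrite !neg_involutive. Qed.

Lemma fEx_neg_fAll C : fEx C = neg (fAll (neg C)).
Proof. simpl. now rewrite neg_involutive. Qed.

Lemma inst_neg C t : inst (neg C) t = neg (inst C t).
Proof. unfold inst. now rewrite neg_fsubst. Qed.

Lemma ffree_lt_neg k A : ffree_lt k (neg A) <-> ffree_lt k A.
Proof. revert k; induction A; simpl; intros; firstorder. Qed.

Lemma teval_num r n : teval r (num n) = n.
Proof. induction n; simpl; auto. Qed.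

Lemma tfree_lt_num k n : tfree_lt k (num n).
Proof. induction n; simpl; auto. Qed.

Lemma tfree_lt_tsubst k m s t :
  tfree_lt k t -> (forall i, i < k -> tfree_lt m (s i)) -> tfree_lt m (tsubst s t).
Proof. induction t; simpl; intuition. Qed.

Lemma ffree_lt_fsubst k m s A :
  ffree_lt k A -> (forall i, i < k -> tfree_lt m (s i)) -> ffree_lt m (fsubst s A).
Proof.
  revert k m s; induction A; simpl; intros k m sg HA Hs;
    try (destruct HA; split); eauto using tfree_lt_tsubst.
  all: apply (IHA (S k)); auto; intros [|i] Hi; simpl; [lia|].
  all: apply (tfree_lt_tsubst m); [apply Hs; lia | simpl; lia].
Qed.

Lemma sentence_inst A t : ffree_lt 1 A -> closed_term t -> sentence (inst A t).
Proof.
  intros HA Ht. apply (ffree_lt_fsubst 1); auto.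
  intros [|i] Hi; simpl; [exact Ht | lia].
Qed.

Lemma sentence_num_literals n :
  sentence (fT (num n)) /\ sentence (fNT (num n)) /\
  sentence (fP (num n)) /\ sentence (fNP (num n)).
Proof. repeat split; apply tfree_lt_num. Qed.

Fixpoint fsize (A : form) : nat :=
  match A with
  | fAnd A B | fOr A B => S (fsize A + fsize B)
  | fAll A | fEx A => S (fsize A)
  | _ => 0
  end.

Lemma fsize_fsubst s A : fsize (fsubst s A) = fsize A.
Proof. revert s; induction A; simpl; auto. Qed.

(** * Strong Kleene satisfaction *)

Lemma teval_ext r r' t : (forall i, r i = r' i) -> teval r t = teval r' t.
Proof. intros H; induction t; simpl; auto. Qed.

Lemma sat_ext M A : forall r r', (forall i, r i = r' i) -> (sat M r A <-> sat M r' A).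
Proof.
  induction A; simpl; intros r r' H; rewrite ?(teval_ext r r' _ H); try reflexivity.
  1,2: now rewrite (IHA1 r r' H), (IHA2 r r' H).
  all: assert (E : forall k, sat M (scons k r) A <-> sat M (scons k r') A)
         by (intros k; apply IHA; intros [|i]; simpl; auto).
  all: now setoid_rewrite E.
Qed.

Lemma teval_tsubst r s t : teval r (tsubst s t) = teval (fun i => teval r (s i)) t.
Proof. induction t; simpl; auto. Qed.

Lemma sat_fsubst M A : forall r sg, sat M r (fsubst sg A) <-> sat M (fun i => teval r (sg i)) A.
Proof.
  induction A; simpl; intros r sg; rewrite ?teval_tsubst; try reflexivity.
  1,2: now rewrite IHA1, IHA2.
  all: assert (E : forall k, sat M (scons k r) (fsubst (up sg) A) <->
                            sat M (scons k (fun i => teval r (sg i))) A)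
         by (intros k; rewrite IHA; apply sat_ext; intros [|i]; simpl; [reflexivity|];
             unfold tshift; now rewrite teval_tsubst).
  all: now setoid_rewrite E.
Qed.

Lemma sat_inst M r A t : sat M r (inst A t) <-> sat M (scons (teval r t) r) A.
Proof. unfold inst. rewrite sat_fsubst. apply sat_ext. now intros [|i]. Qed.

Lemma ssat_inst_num M A n : ssat M (inst A (num n)) <-> sat M (scons n (fun _ => 0)) A.
Proof. unfold ssat. now rewrite sat_inst, teval_num. Qed.

Lemma sat_fshift M r n A : sat M (scons n r) (fshift A) <-> sat M r A.
Proof. unfold fshift. rewrite sat_fsubst. now apply sat_ext. Qed.

Lemma sat_succ0 M r n A : sat M (scons n r) (fsubst succ0 A) <-> sat M (scons (S n) r) A.
Proof. rewrite sat_fsubst. apply sat_ext. now intros [|i]. Qed.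

Lemma sat_mono M N : mle M N -> forall A r, sat M r A -> sat N r A.
Proof. intros (HTp & HTn & HPp & HPn) A; induction A; simpl; firstorder. Qed.

Lemma sat_arith M N A : arith A -> forall r, sat M r A <-> sat N r A.
Proof.
  induction A; simpl; intros HA r; try tauto.
  1,2: now rewrite IHA1, IHA2 by tauto.
  all: now setoid_rewrite IHA.
Qed.

Definition consistent (M : model) : Prop :=
  (forall n, Tpos M n -> Tneg M n -> False) /\ (forall n, Ppos M n -> Pneg M n -> False).

Lemma consistent_sat_neg M : consistent M ->
  forall A r, sat M r A -> sat M r (neg A) -> False.
Proof. intros [HT HP] A; induction A; simpl; firstorder. Qed.

(** * Soundness of the sequent calculus *)

Lemma sat_all_fshift M r n G :
  (forall A, In A (map fshift G) -> sat M (scons n r) A) <-> (forall A, In A G -> sat M r A).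
Proof.
  split; intros H A HA.
  - apply sat_fshift with (n := n), H, in_map, HA.
  - apply in_map_iff in HA as (A' & <- & HA'). now apply sat_fshift, H.
Qed.

Lemma sat_some_fshift M r n D :
  (exists B, In B (map fshift D) /\ sat M (scons n r) B) <-> (exists B, In B D /\ sat M r B).
Proof.
  split; intros (B & HB & HBs).
  - apply in_map_iff in HB as (B' & <- & HB'). apply sat_fshift in HBs. eauto.
  - exists (fshift B). split; [apply in_map, HB | apply sat_fshift, HBs].
Qed.

Section Soundness.
Variable M : model.

Lemma holds_cut G D A : holds M G (A :: D) -> holds M (A :: G) D -> holds M G D.
Proof.
  intros H1 H2 r HG. destruct (H1 r HG) as (B & [<-|HB] & HBs); [|eauto].
  apply H2. intros C [<-|HC]; auto.
Qed.

Lemma holds_negL G D A : consistent M -> holds M G (A :: D) -> holds M (neg A :: G) D.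
Proof.
  intros HM H r HG. destruct (H r) as (B & [<-|HB] & HBs); [auto with datatypes| |eauto].
  exfalso. apply (consistent_sat_neg M HM A r HBs), HG. now left.
Qed.

Lemma holds_allR G D A :
  holds M (map fshift G) (A :: map fshift D) -> holds M G (fAll A :: D).
Proof.
  intros H r HG. destruct (classic (exists B, In B D /\ sat M r B)) as [(B & HB & HBs)|HD].
  - exists B. split; [right|]; auto.
  - exists (fAll A). split; [now left|]. intros n.
    destruct (H (scons n r)) as (B & [<-|HB] & HBs); [now apply sat_all_fshift| |]; auto.
    exfalso. apply HD, (sat_some_fshift M r n). eauto.
Qed.

Lemma holds_exL G D A :
  holds M (A :: map fshift G) (map fshift D) -> holds M (fEx A :: G) D.
Proof.
  intros H r HG. destruct (HG (fEx A) (or_introl eq_refl)) as [n HA].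
  apply (sat_some_fshift M r n), H. intros B [<-|HB]; auto.
  revert B HB. apply sat_all_fshift. intros B HB. apply HG. now right.
Qed.

Lemma holds_repl G D A s t :
  holds M G (inst A t :: D) -> holds M G (fNeq s t :: inst A s :: D).
Proof.
  intros H r HG. destruct (Nat.eq_dec (teval r s) (teval r t)) as [E|E].
  - destruct (H r HG) as (B & [<-|HB] & HBs).
    + exists (inst A s). split; [right; now left|]. apply sat_inst in HBs.
      apply sat_inst. now rewrite E.
    + exists B. split; [right; now right | exact HBs].
  - exists (fNeq s t). split; [now left | exact E].
Qed.

Lemma holds_ind G D A t :
  holds M (A :: map fshift G) (fsubst succ0 A :: map fshift D) ->
  holds M (inst A tzero :: G) (inst A t :: D).
Proof.
  intros H r HG. destruct (classic (exists B, In B D /\ sat M r B)) as [(B & HB & HBs)|HD].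
  - exists B. split; [right|]; auto.
  - exists (inst A t). split; [now left|]. apply sat_inst.
    induction (teval r t) as [|n IH].
    + apply (sat_inst M r A tzero), HG. now left.
    + destruct (H (scons n r)) as (B & [<-|HB] & HBs).
      * intros B [<-|HB]; [exact IH|]. revert B HB. apply sat_all_fshift.
        intros B HB. apply HG. now right.
      * now apply sat_succ0.
      * exfalso. apply HD, (sat_some_fshift M r n). eauto.
Qed.

Theorem deriv_sound (Ax : list form -> list form -> Prop) :
  consistent M -> (forall G D, Ax G D -> holds M G D) ->
  forall G D, deriv Ax G D -> holds M G D.
Proof.
  intros HM HAx G D HD.
  induction HD; eauto using holds_cut, holds_negL, holds_allR, holds_exL, holds_repl, holds_ind;
    intros r HG.
  - destruct (HAx _ _ H (fun i => teval r (s i))) as (B & HB & HBs).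
    + intros A HA. apply sat_fsubst, HG, in_map, HA.
    + exists (fsubst s B). split; [apply in_map, HB | apply sat_fsubst, HBs].
  - exists A. split; [now left | apply HG; now left].
  - destruct (IHHD r) as (B & HB & HBs); [intros A HA; apply HG; auto | eauto].
  - apply IHHD. destruct (HG (fAnd A B)) as [HA HB]; [now left|].
    intros C [<-|[<-|HC]]; auto. apply HG. now right.
  - destruct (IHHD1 r HG) as (C & [<-|HC] & HCs); [|exists C; auto with datatypes].
    destruct (IHHD2 r HG) as (C' & [<-|HC'] & HCs'); [|exists C'; auto with datatypes].
    exists (fAnd A B). split; [now left | now split].
  - destruct (HG (fOr A B)) as [HA|HB]; [now left| |].
    + apply IHHD1. intros C [<-|HC]; auto. apply HG. now right.
    + apply IHHD2. intros C [<-|HC]; auto. apply HG. now right.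
  - destruct (IHHD r HG) as (C & [<-|[<-|HC]] & HCs).
    + exists (fOr A B). split; [now left | now left].
    + exists (fOr A B). split; [now left | now right].
    + exists C. auto with datatypes.
  - apply IHHD. intros C [<-|HC].
    + apply sat_inst, (HG (fAll A)). now left.
    + apply HG. now right.
  - destruct (IHHD r HG) as (C & [<-|HC] & HCs).
    + exists (fEx A). split; [now left|]. exists (teval r t). now apply sat_inst.
    + exists C. auto with datatypes.
  - exists (fEq t t). split; [now left | reflexivity].
Qed.

End Soundness.

Lemma PAax_holds M G D : PAax G D -> holds M G D.
Proof.
  intros HAx r HG. destruct HAx; try (eexists; split; [now left | simpl; lia]).
  - destruct (Nat.eq_dec (r 0) (r 1)).
    + exists (fEq (tvar 0) (tvar 1)). split; [now left | assumption].
    + exists (fNeq (tvar 0) (tvar 1)). split; [right; now left | assumption].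
  - exists (fEq (tvar 0) (tvar 1)). split; [now left|].
    specialize (HG _ (or_introl eq_refl)). simpl in *. lia.
Qed.

Lemma PAderiv_sound X : consistent X -> forall G D, PAderiv G D -> holds X G D.
Proof. intros HX. apply deriv_sound; [exact HX | apply PAax_holds]. Qed.

Lemma holds_sat_single X A C r : holds X [A] [C] -> sat X r A -> sat X r C.
Proof.
  intros H HA. destruct (H r) as (C' & [<-|[]] & HC); [|exact HC].
  intros A' [<-|[]]. exact HA.
Qed.

(** * The jump and its transfinite iteration *)

Lemma mle_refl M : mle M M.
Proof. repeat split; auto. Qed.

Lemma mle_trans M N K : mle M N -> mle N K -> mle M K.
Proof. intros (? & ? & ? & ?) (? & ? & ? & ?); repeat split; auto. Qed.

Lemma emptyM_le M : mle emptyM M.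
Proof. repeat split; simpl; tauto. Qed.

Lemma Pcond_mono R B M N : mle M N -> forall A, Pcond R B M A -> Pcond R B N A.
Proof.
  intros (HTp & HTn & HPp & _) A.
  intros [H|[(t & Ht & HA & H)|[(t & Ht & HA & H)|[(C & D & HA & H)|[(C & D & HA & H)|
          [(C & HA & [y Hy] & H)|(C & HA & [y Hy] & H)]]]]]].
  - now left.
  - right; left. eauto.
  - do 2 right; left. eauto.
  - do 3 right; left. exists C, D. intuition.
  - do 4 right; left. exists C, D. intuition.
  - do 5 right; left. exists C. split; [|split]; eauto. intros z. destruct (H z); auto.
  - do 6 right. exists C. split; [|split]; eauto. intros z. destruct (H z); auto.
Qed.

Lemma jump_mono R B M N : mle M N -> mle (jump R B M) (jump R B N).
Proof.
  intros HMN. repeat split; intros n (A & HA & <- & HAs); exists A;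
    repeat split; auto; [eapply sat_mono | eapply sat_mono | eapply Pcond_mono | eapply sat_mono];
    eauto.
Qed.

Lemma sent_codes_code (P : form -> Prop) A : sent_codes P (code A) <-> sentence A /\ P A.
Proof.
  split; [intros (A' & HA' & HA'A & HP); now apply code_inj in HA'A as <-|].
  intros [HA HP]. now exists A.
Qed.

Definition supM (S : model -> Prop) : model :=
  Model (fun n => exists X, S X /\ Tpos X n) (fun n => exists X, S X /\ Tneg X n)
        (fun n => exists X, S X /\ Ppos X n) (fun n => exists X, S X /\ Pneg X n).

Lemma le_supM (S : model -> Prop) X : S X -> mle X (supM S).
Proof. intros HX. repeat split; simpl; eauto. Qed.

Lemma supM_le (S : model -> Prop) Y : (forall X, S X -> mle X Y) -> mle (supM S) Y.
Proof.
  intros H. repeat split; simpl; intros n (X & HX & Hn); destruct (H X HX) as (? & ? & ? & ?); auto.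
Qed.

(* The tower is a chain: the extreme-point argument behind the Bourbaki-Witt theorem
   (Lang, Algebra, Appendix 2). *)
Section Tower.
Variable f : model -> model.
Hypothesis f_mono : forall X Y, mle X Y -> mle (f X) (f Y).

Inductive tower : model -> Prop :=
| tower_empty : tower emptyM
| tower_step X : tower X -> tower (f X)
| tower_sup (S : model -> Prop) : (forall X, S X -> tower X) -> tower (supM S).

Lemma tower_inflationary X : tower X -> mle X (f X).
Proof.
  induction 1 as [|X HX IH|S HS IH].
  - apply emptyM_le.
  - now apply f_mono.
  - apply supM_le. intros X HX. apply mle_trans with (f X); [now apply IH|].
    apply f_mono, le_supM, HX.
Qed.

Definition extreme (c : model) : Prop :=
  forall x, tower x -> mle x c -> ~ mle c x -> mle (f x) c.

Lemma extreme_split c : tower c -> extreme c -> forall x, tower x -> mle x c \/ mle (f c) x.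
Proof.
  intros Hc Hext x Hx. induction Hx as [|X HX [IH|IH]|S HS IH].
  - left. apply emptyM_le.
  - destruct (classic (mle c X)) as [HcX|HcX].
    + right. now apply f_mono.
    + left. now apply Hext.
  - right. apply mle_trans with X; [exact IH | now apply tower_inflationary].
  - destruct (classic (exists X, S X /\ mle (f c) X)) as [(X & HX & HcX)|Hnone].
    + right. apply mle_trans with X; [exact HcX | now apply le_supM].
    + left. apply supM_le. intros X HX. destruct (IH X HX); [assumption|].
      exfalso. eauto.
Qed.

Lemma tower_extreme c : tower c -> extreme c.
Proof.
  induction 1 as [|c Hc IH|S HS IH]; intros x Hx Hxc Hcx.
  - exfalso. apply Hcx, emptyM_le.
  - destruct (extreme_split c Hc IH x Hx) as [Hxc'|]; [|contradiction].
    destruct (classic (mle c x)) as [Hcx'|Hcx'].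
    + now apply f_mono.
    + apply mle_trans with c; [now apply IH | now apply tower_inflationary].
  - assert (Hc : exists c, S c /\ ~ mle (f c) x).
    { apply NNPP. intros Hnone. apply Hcx, supM_le. intros X HX.
      apply mle_trans with (f X); [now apply tower_inflationary, HS|].
      apply NNPP. intros HfX. eauto. }
    destruct Hc as (c & Hc & Hfc).
    destruct (extreme_split c (HS c Hc) (IH c Hc) x Hx) as [Hxc'|]; [|contradiction].
    destruct (classic (mle c x)) as [Hcx'|Hcx'].
    + assert (Hc' : exists c', S c' /\ ~ mle c' c).
      { apply NNPP. intros Hnone. apply Hcx, mle_trans with c; [|exact Hcx'].
        apply supM_le. intros X HX. apply NNPP. intros HXc. eauto. }
      destruct Hc' as (c' & Hc' & Hc'c).
      destruct (extreme_split c (HS c Hc) (IH c Hc) c' (HS c' Hc')) as [|Hfc']; [contradiction|].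
      apply mle_trans with (f c); [now apply f_mono|].
      apply mle_trans with c'; [exact Hfc' | now apply le_supM].
    + apply mle_trans with c; [now apply (IH c Hc) | now apply le_supM].
Qed.

Lemma tower_total x y : tower x -> tower y -> mle x y \/ mle y x.
Proof.
  intros Hx Hy. destruct (extreme_split y Hy (tower_extreme y Hy) x Hx) as [|Hyx]; [now left|].
  right. apply mle_trans with (f y); [now apply tower_inflationary | exact Hyx].
Qed.

Lemma tower_top_fixed : meq (f (supM tower)) (supM tower).
Proof.
  assert (Htop : tower (supM tower)) by (now apply tower_sup).
  split; [apply le_supM, tower_step, Htop | apply tower_inflationary, Htop].
Qed.

End Tower.

(** * Consistency of the least fixed point *)

Lemma sat_defines1 F Rl M r a :
  defines1 F Rl -> (sat M r (fapp F [a]) <-> Rl (teval r a)).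
Proof. intros [HF HRl]. unfold fapp. now rewrite sat_fsubst, (sat_arith M emptyM), HRl. Qed.

Lemma sat_defines2 F Rl M r a b :
  defines2 F Rl -> (sat M r (fapp F [a; b]) <-> Rl (teval r a) (teval r b)).
Proof. intros [HF HRl]. unfold fapp. now rewrite sat_fsubst, (sat_arith M emptyM), HRl. Qed.

Lemma sat_defines3 F Rl M r a b c :
  defines3 F Rl -> (sat M r (fapp F [a; b; c]) <-> Rl (teval r a) (teval r b) (teval r c)).
Proof. intros [HF HRl]. unfold fapp. now rewrite sat_fsubst, (sat_arith M emptyM), HRl. Qed.

Definition PiR (n : nat) : Prop := BPcodes n \/ exists z, NegR n z /\ BPcodes z.

Lemma sat_PiAt R B M r t : rep_correct R -> defines1 B BPcodes ->
  (sat M r (PiAt R B t) <-> PiR (teval r t)).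
Proof.
  intros HR HB. assert (HNeg : defines2 (rNeg R) NegR) by apply HR.
  unfold PiAt, fapp at 1. rewrite sat_fsubst. simpl sat.
  setoid_rewrite (sat_defines1 _ _ _ _ _ HB).
  setoid_rewrite (sat_defines2 _ _ _ _ _ _ HNeg).
  reflexivity.
Qed.

Lemma asat_PiAt_quote R B A : rep_correct R -> defines1 B BPcodes ->
  (asat (fun _ => 0) (PiAt R B (quote A)) <-> PiR (code A)).
Proof. intros HR HB. unfold asat, quote. now rewrite sat_PiAt, teval_num. Qed.

Lemma PiR_code A : PiR (code A) <-> base_paradoxical A \/ base_paradoxical (neg A).
Proof.
  split.
  - intros [(A' & HA' & HA'A)|(z & (A' & HA'A & <-) & (A'' & HA'' & HA''z))].
    + apply code_inj in HA'A as ->. now left.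
    + apply code_inj in HA'A as ->. apply code_inj in HA''z as ->. now right.
  - intros [HA|HA]; [left; now exists A | right].
    exists (code (neg A)). split; [now exists A | now exists (neg A)].
Qed.

Lemma PiR_code_neg A : PiR (code (neg A)) <-> PiR (code A).
Proof. rewrite !PiR_code, neg_involutive. tauto. Qed.

Definition undetermined (X : model) (A : form) : Prop := ~ ssat X A /\ ~ ssat X (neg A).

Section Undetermined.
Variable X : model.
Hypothesis HX : consistent X.

Lemma undetermined_neg A : undetermined X (neg A) <-> undetermined X A.
Proof. unfold undetermined. rewrite neg_involutive. tauto. Qed.

Lemma undetermined_and C D :
  undetermined X C -> undetermined X D -> undetermined X (fAnd C D).
Proof. unfold undetermined, ssat. simpl. tauto. Qed.

Lemma undetermined_and_true_l C D :
  ssat X C -> undetermined X D -> undetermined X (fAnd C D).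
Proof.
  unfold undetermined, ssat. simpl. intros HC HD.
  pose proof (consistent_sat_neg X HX C _ HC). tauto.
Qed.

Lemma undetermined_and_true_r C D :
  ssat X D -> undetermined X C -> undetermined X (fAnd C D).
Proof.
  unfold undetermined, ssat. simpl. intros HD HC.
  pose proof (consistent_sat_neg X HX D _ HD). tauto.
Qed.

Lemma undetermined_all C :
  (exists y, undetermined X (inst C (num y))) ->
  (forall y, undetermined X (inst C (num y)) \/ ssat X (inst C (num y))) ->
  undetermined X (fAll C).
Proof.
  unfold undetermined. intros [y [Hy _]] Hall. split.
  - intros HC. apply Hy, ssat_inst_num, HC.
  - intros [m Hm]. assert (Hm' : ssat X (neg (inst C (num m)))).
    { unfold inst. rewrite neg_fsubst. now apply ssat_inst_num. }
    destruct (Hall m) as [[_ Hnot]|Htrue]; [tauto|].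
    exact (consistent_sat_neg X HX _ _ Htrue Hm').
Qed.

Lemma undetermined_or C D :
  undetermined X C -> undetermined X D -> undetermined X (fOr C D).
Proof.
  rewrite fOr_neg_fAnd, undetermined_neg, <- (undetermined_neg C), <- (undetermined_neg D).
  apply undetermined_and.
Qed.

Lemma undetermined_or_false_l C D :
  ssat X (neg C) -> undetermined X D -> undetermined X (fOr C D).
Proof.
  rewrite fOr_neg_fAnd, undetermined_neg, <- (undetermined_neg D).
  apply undetermined_and_true_l.
Qed.

Lemma undetermined_or_false_r C D :
  ssat X (neg D) -> undetermined X C -> undetermined X (fOr C D).
Proof.
  rewrite fOr_neg_fAnd, undetermined_neg, <- (undetermined_neg C).
  apply undetermined_and_true_r.
Qed.

Lemma undetermined_ex C :
  (exists y, undetermined X (inst C (num y))) ->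
  (forall y, undetermined X (inst C (num y)) \/ ssat X (neg (inst C (num y)))) ->
  undetermined X (fEx C).
Proof.
  rewrite fEx_neg_fAll, undetermined_neg. intros Hy Hall.
  apply undetermined_all; setoid_rewrite inst_neg; setoid_rewrite undetermined_neg; assumption.
Qed.

End Undetermined.

Definition coherent (X : model) : Prop :=
  consistent X /\ (forall n, Ppos X n -> Tpos X n -> False) /\
  (forall n, Ppos X n -> Tneg X n -> False).

Section Consistency.
Variables (R : SynRep) (B : form).
Hypotheses (HR : rep_correct R) (HB : defines1 B BPcodes).

Lemma base_paradoxical_undetermined X A : consistent X -> mle X (jump R B X) ->
  base_paradoxical A -> undetermined X A.
Proof.
  intros HX (HTp & HTn & _) (_ & HAT & _ & HnAT & _).
  pose proof (consistent_sat_neg X HX A (fun _ => 0)) as Hcons.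
  split; intros HA.
  - apply (holds_sat_single X _ _ _ (PAderiv_sound X HX _ _ HAT)) in HA as HT.
    simpl in HT. unfold quote in HT. rewrite teval_num in HT.
    apply HTn, sent_codes_code in HT as [_ HnA]. exact (Hcons HA HnA).
  - apply (holds_sat_single X _ _ _ (PAderiv_sound X HX _ _ HnAT)) in HA as HT.
    simpl in HT. unfold quote in HT. rewrite teval_num in HT.
    apply HTp, sent_codes_code in HT as [_ HA']. exact (Hcons HA' HA).
Qed.

Lemma PiR_undetermined X A : consistent X -> mle X (jump R B X) ->
  PiR (code A) -> undetermined X A.
Proof.
  intros HX HXj. rewrite PiR_code. intros [HA|HA].
  - now apply base_paradoxical_undetermined.
  - apply (undetermined_neg X). now apply base_paradoxical_undetermined.
Qed.

Lemma Pcond_undetermined X A : coherent X -> mle X (jump R B X) ->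
  Pcond R B X A -> undetermined X A.
Proof.
  intros (HX & HPT & HPF) HXj. pose proof HXj as (HTp & HTn & HPp & _).
  remember (S (fsize A)) as n eqn:Hn. assert (Hsize : fsize A < n) by lia. clear Hn.
  revert A Hsize. induction n as [|n IH]; intros A Hsize HA; [lia|].
  assert (IHP : forall C, fsize C < n -> Ppos X (code C) -> undetermined X C)
    by (intros C HC HP; apply HPp, sent_codes_code in HP as [_ HP]; auto).
  assert (HT : forall C, Tpos X (code C) -> ssat X C)
    by (intros C HC; now apply HTp, sent_codes_code in HC as [_ HC]).
  assert (HF : forall C, Tneg X (code C) -> ssat X (neg C))
    by (intros C HC; now apply HTn, sent_codes_code in HC as [_ HC]).
  destruct HA as [HA|[(t & _ & -> & HA)|[(t & _ & -> & HA)|[(C & D & -> & HA)|[(C & D & -> & HA)|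
                  [(C & -> & [y Hy] & HA)|(C & -> & [y Hy] & HA)]]]]]];
    simpl in Hsize.
  - rewrite asat_PiAt_quote in HA by assumption. now apply PiR_undetermined.
  - split; [exact (HPT _ HA) | exact (HPF _ HA)].
  - split; [exact (HPF _ HA) | exact (HPT _ HA)].
  - destruct HA as [[HC HD]|[[HC HD]|[HD HC]]].
    + apply undetermined_and; apply IHP; auto; lia.
    + apply undetermined_and_true_l; [exact HX | apply HT, HC | apply IHP; auto; lia].
    + apply undetermined_and_true_r; [exact HX | apply HT, HD | apply IHP; auto; lia].
  - destruct HA as [[HC HD]|[[HC HD]|[HD HC]]].
    + apply undetermined_or; apply IHP; auto; lia.
    + apply undetermined_or_false_l; [exact HX | apply HF, HC | apply IHP; auto; lia].
    + apply undetermined_or_false_r; [exact HX | apply HF, HD | apply IHP; auto; lia].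
  - assert (Hinst : forall m, fsize (inst C (num m)) < n)
      by (intros m; unfold inst; rewrite fsize_fsubst; lia).
    apply undetermined_all; [exact HX | exists y; auto |].
    intros m. destruct (HA m); [left; auto | right; auto].
  - assert (Hinst : forall m, fsize (inst C (num m)) < n)
      by (intros m; unfold inst; rewrite fsize_fsubst; lia).
    apply undetermined_ex; [exact HX | exists y; auto |].
    intros m. destruct (HA m); [left; auto | right; auto].
Qed.

Lemma jump_coherent X : coherent X -> mle X (jump R B X) -> coherent (jump R B X).
Proof.
  intros HXc HXj. pose proof HXc as [HX _].
  assert (HPund : forall A, Pcond R B X A -> undetermined X A)
    by (intros A; now apply Pcond_undetermined).
  split; [split|split];
    intros n (A & _ & <- & H1) H2; apply sent_codes_code in H2 as [_ H2].
  - exact (consistent_sat_neg X HX A _ H1 H2).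
  - apply HPund in H1 as [HA HnA]. destruct H2; tauto.
  - apply HPund in H1 as [HA HnA]. tauto.
  - apply HPund in H1 as [HA HnA]. tauto.
Qed.

Lemma coherent_le X Y : mle X Y -> coherent Y -> coherent X.
Proof.
  intros (HTp & HTn & HPp & HPn) ([HT HP] & HPT & HPF).
  split; [split|split]; eauto.
Qed.

Lemma coherent_supM_chain (S : model -> Prop) :
  (forall X, S X -> coherent X) -> (forall X Y, S X -> S Y -> mle X Y \/ mle Y X) ->
  coherent (supM S).
Proof.
  intros Hcoh Hchain.
  assert (Hboth : forall X Y, S X -> S Y -> exists Z, S Z /\ mle X Z /\ mle Y Z).
  { intros X Y HX HY. destruct (Hchain X Y HX HY).
    - exists Y. auto using mle_refl.
    - exists X. auto using mle_refl. }
  split; [split|split]; simpl; intros n (X & HX & H1) (Y & HY & H2);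
    destruct (Hboth X Y HX HY) as (Z & HZ & (? & ? & ? & ?) & (? & ? & ? & ?));
    destruct (Hcoh Z HZ) as ([? ?] & ? & ?); eauto.
Qed.

Lemma tower_coherent X : tower (jump R B) X -> coherent X.
Proof.
  induction 1 as [|X HX IH|S HS IH].
  - repeat split; simpl; tauto.
  - apply jump_coherent; [exact IH | apply tower_inflationary; auto using jump_mono].
  - apply coherent_supM_chain; [exact IH|]. intros X Y HX HY.
    apply (tower_total (jump R B)); auto using jump_mono.
Qed.

Lemma least_fixed_point_consistent M : least_fixed_point R B M -> consistent M.
Proof.
  intros [_ Hleast].
  enough (Hcoh : coherent M) by apply Hcoh.
  apply (coherent_le M (supM (tower (jump R B)))).
  - apply Hleast, tower_top_fixed, jump_mono.
  - apply tower_coherent, tower_sup. auto.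
Qed.

End Consistency.

(** * The initial sequents of TP at a fixed point *)

Fixpoint all_sat (M : model) (r : nat -> nat) (G : list form) : Prop :=
  match G with [] => True | A :: G => sat M r A /\ all_sat M r G end.

Lemma holds_singleton_intro M G C : (forall r, all_sat M r G -> sat M r C) -> holds M G [C].
Proof.
  intros H r HG. exists C. split; [now left|]. apply H. clear H.
  induction G as [|A G IH]; simpl; [exact I|].
  split; [apply HG; now left | apply IH; intros A' HA'; apply HG; now right].
Qed.

Lemma SubR_code A n y : SubR (code A) n y <-> y = code (inst A (num n)).
Proof.
  split; [intros (A' & HA' & <-); now apply code_inj in HA' as -> | intros ->; now exists A].
Qed.

Lemma sat_SubLit R M r lit : defines3 (rSub R) SubR ->
  (sat M r (via (rSub R) [tvar 1; tvar 0] lit) <->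
   exists z, SubR (r 1) (r 0) z /\ sat M (scons z r) (lit (tvar 0))).
Proof.
  intros HSub. unfold via. simpl sat. now setoid_rewrite (sat_defines3 _ _ _ _ _ _ _ HSub).
Qed.

Lemma ex_SubR_code A n (P : nat -> Prop) :
  (exists z, SubR (code A) n z /\ P z) <-> P (code (inst A (num n))).
Proof.
  split; [intros (z & Hz & HP); now apply SubR_code in Hz as ->|].
  intros HP. exists (code (inst A (num n))). split; [now apply SubR_code | exact HP].
Qed.


Ltac destruct_Pcond H :=
  destruct H as [H|[(?t & ?Ht & ?Heq & H)|[(?t & ?Ht & ?Heq & H)|[(?C & ?D & ?Heq & H)|
                 [(?C & ?D & ?Heq & H)|[(?C & ?Heq & H)|(?C & ?Heq & H)]]]]]];
  try discriminate;
  try match goal with Heq : _ = _ |- _ => injection Heq; intros; subst end.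

Section FixedPoint.
Variables (R : SynRep) (B : form) (M : model).
Hypotheses (HR : rep_correct R) (HB : defines1 B BPcodes) (HM : meq (jump R B M) M).

Lemma Pcond_fT X t : closed_term t ->
  (Pcond R B X (fT t) <-> Ppos X (val t) \/ PiR (code (fT t))).
Proof.
  intros Ht. unfold Pcond. rewrite asat_PiAt_quote by assumption. split.
  - intros HP. destruct_Pcond HP; auto.
  - intros [HP|HP]; [right; left; now exists t | now left].
Qed.

Lemma Pcond_fNT X t : closed_term t ->
  (Pcond R B X (fNT t) <-> Ppos X (val t) \/ PiR (code (fNT t))).
Proof.
  intros Ht. unfold Pcond. rewrite asat_PiAt_quote by assumption. split.
  - intros HP. destruct_Pcond HP; auto.
  - intros [HP|HP]; [do 2 right; left; now exists t | now left].
Qed.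

Lemma Pcond_fP X t : Pcond R B X (fP t) <-> PiR (code (fP t)).
Proof.
  unfold Pcond. rewrite asat_PiAt_quote by assumption.
  split; [intros HP; now destruct_Pcond HP | now left].
Qed.

Lemma Pcond_fNP X t : Pcond R B X (fNP t) <-> PiR (code (fNP t)).
Proof.
  unfold Pcond. rewrite asat_PiAt_quote by assumption.
  split; [intros HP; now destruct_Pcond HP | now left].
Qed.

Lemma fixpoint_Tpos_code A : Tpos M (code A) <-> sentence A /\ ssat M A.
Proof.
  destruct HM as [(HT & _) (HT' & _)].
  rewrite <- (sent_codes_code (ssat M)). split; [apply HT' | apply HT].
Qed.

Lemma fixpoint_Tneg_code A : Tneg M (code A) <-> sentence A /\ ssat M (neg A).
Proof.
  destruct HM as [(_ & HF & _) (_ & HF' & _)].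
  rewrite <- (sent_codes_code (fun A => ssat M (neg A))). split; [apply HF' | apply HF].
Qed.

Lemma fixpoint_Ppos_code A : Ppos M (code A) <-> sentence A /\ Pcond R B M A.
Proof.
  destruct HM as [(_ & _ & HP & _) (_ & _ & HP' & _)].
  rewrite <- (sent_codes_code (Pcond R B M)). split; [apply HP' | apply HP].
Qed.

Lemma fixpoint_Pneg_code A : Pneg M (code A) <-> sentence A /\ ssat M (fOr A (neg A)).
Proof.
  destruct HM as [(_ & _ & _ & HN) (_ & _ & _ & HN')].
  rewrite <- (sent_codes_code (fun A => ssat M (fOr A (neg A)))). split; [apply HN' | apply HN].
Qed.

Lemma fixpoint_T_eq s t : closed_term s -> closed_term t ->
  (Tpos M (code (fEq s t)) <-> val s = val t).
Proof.
  intros Hs Ht. rewrite fixpoint_Tpos_code. unfold sentence, closed_term in *. simpl. tauto.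
Qed.

Lemma fixpoint_T_neq s t : closed_term s -> closed_term t ->
  (Tpos M (code (fNeq s t)) <-> val s <> val t).
Proof.
  intros Hs Ht. rewrite fixpoint_Tpos_code. unfold sentence, closed_term in *. simpl. tauto.
Qed.

Lemma fixpoint_T_T n : Tpos M (code (fT (num n))) <-> Tpos M n.
Proof.
  rewrite fixpoint_Tpos_code. unfold ssat. simpl. rewrite teval_num.
  pose proof (sentence_num_literals n). tauto.
Qed.

Lemma fixpoint_T_P n : Tpos M (code (fP (num n))) <-> Ppos M n.
Proof.
  rewrite fixpoint_Tpos_code. unfold ssat. simpl. rewrite teval_num.
  pose proof (sentence_num_literals n). tauto.
Qed.

Lemma fixpoint_T_NP n : Tpos M (code (fNP (num n))) <-> Pneg M n.
Proof.
  rewrite fixpoint_Tpos_code. unfold ssat. simpl. rewrite teval_num.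
  pose proof (sentence_num_literals n). tauto.
Qed.

Lemma fixpoint_T_neg A : sentence A -> (Tpos M (code (neg A)) <-> Tneg M (code A)).
Proof.
  intros HA. rewrite fixpoint_Tpos_code, fixpoint_Tneg_code.
  unfold sentence. rewrite ffree_lt_neg. tauto.
Qed.

Lemma fixpoint_T_and A C : sentence A -> sentence C ->
  (Tpos M (code (fAnd A C)) <-> Tpos M (code A) /\ Tpos M (code C)).
Proof. intros HA HC. rewrite !fixpoint_Tpos_code. unfold sentence, ssat in *. simpl. tauto. Qed.

Lemma fixpoint_T_or A C : sentence A -> sentence C ->
  (Tpos M (code (fOr A C)) <-> Tpos M (code A) \/ Tpos M (code C)).
Proof. intros HA HC. rewrite !fixpoint_Tpos_code. unfold sentence, ssat in *. simpl. tauto. Qed.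

Lemma fixpoint_T_all A : ffree_lt 1 A ->
  (Tpos M (code (fAll A)) <-> forall n, Tpos M (code (inst A (num n)))).
Proof.
  intros HA. rewrite fixpoint_Tpos_code. setoid_rewrite fixpoint_Tpos_code.
  setoid_rewrite ssat_inst_num.
  split; [intros [_ HAs] n; split; [apply sentence_inst, tfree_lt_num|]; auto|].
  intros HAs. split; [exact HA|]. intros n. apply HAs.
Qed.

Lemma fixpoint_T_ex A : ffree_lt 1 A ->
  (Tpos M (code (fEx A)) <-> exists n, Tpos M (code (inst A (num n)))).
Proof.
  intros HA. rewrite fixpoint_Tpos_code. setoid_rewrite fixpoint_Tpos_code.
  setoid_rewrite ssat_inst_num.
  split; [intros [_ [n HAs]]; exists n; split; [apply sentence_inst, tfree_lt_num|]; auto|].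
  intros [n [_ HAs]]. split; [exact HA | now exists n].
Qed.

Lemma fixpoint_P_Pi A : sentence A -> PiR (code A) -> Ppos M (code A).
Proof.
  intros HA HPi. apply fixpoint_Ppos_code. split; [exact HA|]. left.
  now apply asat_PiAt_quote.
Qed.

Lemma fixpoint_P_T n : Ppos M (code (fT (num n))) <-> Ppos M n \/ PiR (code (fT (num n))).
Proof.
  rewrite fixpoint_Ppos_code, Pcond_fT by apply tfree_lt_num.
  unfold val. rewrite teval_num. pose proof (sentence_num_literals n). tauto.
Qed.

Lemma fixpoint_P_NT_T n : Ppos M (code (fNT (num n))) <-> Ppos M (code (fT (num n))).
Proof.
  rewrite !fixpoint_Ppos_code, Pcond_fT, Pcond_fNT by apply tfree_lt_num.
  rewrite <- (PiR_code_neg (fT (num n))). pose proof (sentence_num_literals n). simpl. tauto.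
Qed.

Lemma fixpoint_P_NP_P n : Ppos M (code (fNP (num n))) <-> Ppos M (code (fP (num n))).
Proof.
  rewrite !fixpoint_Ppos_code, Pcond_fP, Pcond_fNP.
  rewrite <- (PiR_code_neg (fP (num n))). pose proof (sentence_num_literals n). simpl. tauto.
Qed.

Lemma fixpoint_P_and A C : sentence A -> sentence C ->
  (Ppos M (code (fAnd A C)) <->
   (Ppos M (code A) /\ Ppos M (code C)) \/ (Tpos M (code A) /\ Ppos M (code C)) \/
   (Tpos M (code C) /\ Ppos M (code A)) \/ PiR (code (fAnd A C))).
Proof.
  intros HA HC. rewrite fixpoint_Ppos_code. unfold Pcond. rewrite asat_PiAt_quote by assumption.
  split; [intros [_ HP]; destruct_Pcond HP; tauto|].
  intros HP. split; [now split|].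
  destruct HP as [HP|[HP|[HP|HP]]]; [| | |now left]; do 3 right; left; exists A, C; tauto.
Qed.

Lemma fixpoint_P_or A C : sentence A -> sentence C ->
  (Ppos M (code (fOr A C)) <->
   (Ppos M (code A) /\ Ppos M (code C)) \/ (Tneg M (code A) /\ Ppos M (code C)) \/
   (Tneg M (code C) /\ Ppos M (code A)) \/ PiR (code (fOr A C))).
Proof.
  intros HA HC. rewrite fixpoint_Ppos_code. unfold Pcond. rewrite asat_PiAt_quote by assumption.
  split; [intros [_ HP]; destruct_Pcond HP; tauto|].
  intros HP. split; [now split|].
  destruct HP as [HP|[HP|[HP|HP]]]; [| | |now left]; do 4 right; left; exists A, C; tauto.
Qed.

Lemma fixpoint_P_all A : ffree_lt 1 A ->
  (Ppos M (code (fAll A)) <->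
   ((exists n, Ppos M (code (inst A (num n)))) /\
    (forall n, Ppos M (code (inst A (num n))) \/ Tpos M (code (inst A (num n))))) \/
   PiR (code (fAll A))).
Proof.
  intros HA. rewrite fixpoint_Ppos_code. unfold Pcond. rewrite asat_PiAt_quote by assumption.
  split; [intros [_ HP]; destruct_Pcond HP; tauto|].
  intros [HP|HP]; split; [exact HA | do 5 right; left; now exists A | exact HA | now left].
Qed.

Lemma fixpoint_P_ex A : ffree_lt 1 A ->
  (Ppos M (code (fEx A)) <->
   ((exists n, Ppos M (code (inst A (num n)))) /\
    (forall n, Ppos M (code (inst A (num n))) \/ Tneg M (code (inst A (num n))))) \/
   PiR (code (fEx A))).
Proof.
  intros HA. rewrite fixpoint_Ppos_code. unfold Pcond. rewrite asat_PiAt_quote by assumption.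
  split; [intros [_ HP]; destruct_Pcond HP; tauto|].
  intros [HP|HP]; split; [exact HA | do 6 right; now exists A | exact HA | now left].
Qed.

Lemma fixpoint_NP_excluded_middle A : sentence A ->
  (Pneg M (code A) <-> Tpos M (code (fOr A (neg A)))).
Proof.
  intros HA. rewrite fixpoint_Pneg_code, fixpoint_Tpos_code.
  unfold sentence in *. simpl. rewrite ffree_lt_neg. tauto.
Qed.

(* The representation formulas are arithmetical: replace them by the relations they define,
   then identify the codes they talk about by injectivity of the coding. *)
Ltac decode_syntax r HG :=
  repeat match goal with
  | H : context [sat ?X ?r (fapp ?F [?a])], HF : defines1 ?F _ |- _ =>
      rewrite (sat_defines1 _ _ X r a HF) in H
  | H : context [sat ?X ?r (fapp ?F [?a; ?b])], HF : defines2 ?F _ |- _ =>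
      rewrite (sat_defines2 _ _ X r a b HF) in H
  | H : context [sat ?X ?r (fapp ?F [?a; ?b; ?c])], HF : defines3 ?F _ |- _ =>
      rewrite (sat_defines3 _ _ X r a b c HF) in H
  end;
  cbn [teval scons sat neg] in *;
  match goal with HSub : defines3 (rSub ?R) SubR |- _ =>
    try setoid_rewrite (fun M r lit => sat_SubLit R M r lit HSub) in HG;
    try setoid_rewrite (fun M r lit => sat_SubLit R M r lit HSub) end;
  match goal with HR : rep_correct ?R, HB : defines1 ?B BPcodes |- _ =>
    try setoid_rewrite (fun M r t => sat_PiAt R B M r t HR HB) in HG;
    try setoid_rewrite (fun M r t => sat_PiAt R B M r t HR HB) end;
  cbn [teval scons sat] in *;
  unfold SentR, ClTR, ValR, EqcR, NeqcR, NegR, TcR, PcR, AndcR, OrcR, Fml1R, AllcR, ExcR in HG;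
  repeat match goal with
  | H : True |- _ => clear H
  | H : exists _, _ |- _ => destruct H
  | H : _ /\ _ |- _ => destruct H
  | H : code _ = code _ |- _ => apply code_inj in H; subst
  | H : tcode _ = tcode _ |- _ => apply tcode_inj in H; subst
  | H : SubR (code _) _ _ |- _ => apply SubR_code in H; subst
  | H : _ = r _ |- _ => rewrite <- H in *; clear H
  | H : r _ = _ |- _ => rewrite H in *; clear H
  end;
  repeat match goal with H : context [exists z, SubR _ _ z /\ _] |- _ =>
    setoid_rewrite ex_SubR_code in H end;
  try setoid_rewrite ex_SubR_code;
  rewrite ?or_assoc in *; cbn [neg] in *.

Lemma TPax_holds G D : TPax R B G D -> holds M G D.
Proof.
  pose proof HR as (HSent & HClT & HVal & HEqc & HNeqc & HNeg & HTc & HPc & HAndc & HOrc &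
                    HFml1 & HAllc & HExc & HSub).
  intros HAx. destruct HAx; apply holds_singleton_intro; intros r HG; cbn [all_sat] in HG;
    decode_syntax r HG.
  - now apply <- fixpoint_T_eq.               - now apply -> fixpoint_T_eq.
  - now apply <- fixpoint_T_neq.              - now apply -> fixpoint_T_neq.
  - now apply <- fixpoint_T_P.                - now apply -> fixpoint_T_P.
  - now apply <- fixpoint_T_NP.               - now apply -> fixpoint_T_NP.
  - now apply <- fixpoint_T_T.                - now apply -> fixpoint_T_T.
  - now apply -> fixpoint_T_neg.              - now apply <- fixpoint_T_neg.
  - now apply <- fixpoint_T_and.              - now apply -> fixpoint_T_and.
  - now apply <- fixpoint_T_or.               - now apply -> fixpoint_T_or.
  - now apply <- fixpoint_T_all.              - now apply -> fixpoint_T_all.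
  - apply <- fixpoint_T_ex; eauto.            - now apply -> fixpoint_T_ex.
  - now apply fixpoint_P_Pi.
  - now apply -> fixpoint_P_NT_T.             - now apply <- fixpoint_P_NT_T.
  - now apply -> fixpoint_P_NP_P.             - now apply <- fixpoint_P_NP_P.
  - now apply -> fixpoint_P_T.                - now apply <- fixpoint_P_T.
  - now apply -> fixpoint_P_and.              - now apply <- fixpoint_P_and.
  - now apply -> fixpoint_P_or.               - now apply <- fixpoint_P_or.
  - now apply -> fixpoint_P_all.              - now apply <- fixpoint_P_all.
  - now apply -> fixpoint_P_ex.               - now apply <- fixpoint_P_ex.
  - now apply <- fixpoint_NP_excluded_middle.
Qed.

End FixedPoint.

Lemma omega_consistent_of_model (Der : list form -> list form -> Prop) M :
  consistent M -> (forall G D, Der G D -> holds M G D) -> omega_consistent Der.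
Proof.
  intros HM Hsound (A & _ & Hall & Hex).
  destruct (Hsound _ _ Hex (fun _ => 0)) as (C & [<-|[]] & [n Hn]); [intros ? []|].
  destruct (Hsound _ _ (Hall n) (fun _ => 0)) as (C & [<-|[]] & HAn); [intros ? []|].
  apply sat_inst in HAn. rewrite teval_num in HAn.
  exact (consistent_sat_neg M HM A _ HAn Hn).
Qed.

Theorem mainTheorem1 (R : SynRep) (B : form)
  (HR : rep_correct R) (HB : defines1 B BPcodes)
  (M : model) (HM : least_fixed_point R B M) :
  (forall G D, TPderiv R B G D -> holds M G D) /\
  omega_consistent (TPderiv R B).
Proof.
  assert (HMcons : consistent M) by exact (least_fixed_point_consistent R B HR HB M HM).
  assert (Hsound : forall G D, TPderiv R B G D -> holds M G D).
  { apply deriv_sound; [exact HMcons|]. intros G D [HPA|HTP].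
    - now apply PAax_holds.
    - exact (TPax_holds R B M HR HB (proj1 HM) G D HTP). }
  split; [exact Hsound | exact (omega_consistent_of_model _ M HMcons Hsound)].
Qed.
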